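(* Let $p$ be an odd prime, let $r=(p-1)/2$, let $\zeta_p=e^{2\pi i/p}$, and let $\varepsilon=(-1)^{(p-1)/2}$. Let $Q$ be either $Q_1(x)=x^2/p$ or $Q_2(x)=cx^2/p$ with $c$ a fixed quadratic non-residue modulo $p$ (viewed as functions $\mathbb{Z}/p\mathbb{Z}\to\mathbb{Q}/\mathbb{Z}$). For $0\le j\le r$ put $\theta_j=e^{2\pi i Q(j)}$, let $T=\operatorname{diag}(\theta_0,\theta_1,\dots,\theta_r)$ be the $(r+1)\times(r+1)$ diagonal matrix, and let $V_Q$ be the $(r+1)\times(r+1)$ Vandermonde matrix whose $(j,k)$ entry is $\theta_j^{\,k}$ for $0\le j,k\le r$ (it is invertible since the $\theta_j$ are pairwise distinct). Then every entry of $T'=V_Q^{-1}TV_Q$ lies in $\mathbb{Z}\left[\frac{1}{2}(1+\sqrt{\varepsilon p})\right]$, the ring of integers of $\mathbb{Q}(\sqrt{\varepsilon p})$.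
   Context: Here $\sqrt{\varepsilon p}$ denotes $\sqrt{p}$ if $p\equiv 1 \pmod 4$ and $\sqrt{-p}=i\sqrt p$ if $p\equiv 3\pmod 4$; equivalently $\sqrt{\varepsilon p}=\sum_{x\in\mathbb{Z}/p\mathbb{Z}}\zeta_p^{x^2}$. *)

From HB Require Import structures.
From mathcomp Require Import all_boot all_order all_algebra all_field.
Set Implicit Arguments. Unset Strict Implicit. Unset Printing Implicit Defensive.
Import Order.TTheory GRing.Theory Num.Theory.
Local Open Scope ring_scope.

(* zeta_p = e^{2 pi i / p}: p.-root (-1) is the p-th root of -1 of minimal
   non-negative argument, i.e. e^{i pi / p}; its square is e^{2 pi i/p}. *)
Definition zeta (p : nat) : algC := (p.-root (-1)) ^+ 2.

Definition sqrt_eps_p (p : nat) : algC :=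
  if (p %% 4 == 1)%N then sqrtC p%:R else 'i * sqrtC p%:R.

Definition omega (p : nat) : algC := (1 + sqrt_eps_p p) / 2%:R.

Definition in_Z_omega (p : nat) (x : algC) : Prop :=
  exists P : {poly int}, x = (map_poly intr P).[omega p].

Definition qnr (p : nat) (c : int) : Prop :=
  ~~ (p%:Z %| c)%Z /\ forall x : int, ~~ (p%:Z %| x ^+ 2 - c)%Z.

Definition theta (p : nat) (c : int) (j : nat) : algC :=
  zeta p ^ (c * (j ^ 2)%:Z).

Definition Tmat (p : nat) (c : int) : 'M[algC]_((p.-1)./2.+1) :=
  \matrix_(j, k) (theta p c j *+ (j == k)).

Definition Vmat (p : nat) (c : int) : 'M[algC]_((p.-1)./2.+1) :=
  \matrix_(j, k) (theta p c j ^+ k).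

Definition Tprime (p : nat) (c : int) : 'M[algC]_((p.-1)./2.+1) :=
  invmx (Vmat p c) *m Tmat p c *m Vmat p c.

From HB Require Import structures.
From mathcomp Require Import all_boot all_order all_algebra all_field.
From mathcomp Require Import zify ring.
Set Implicit Arguments. Unset Strict Implicit. Unset Printing Implicit Defensive.
Import Order.TTheory GRing.Theory Num.Theory.
Local Open Scope ring_scope.

(* Conjugating the diagonal matrix of the pairwise distinct theta_j by their
   Vandermonde matrix gives the companion matrix of f = prod_j (X - theta_j),
   so it suffices that the coefficients of f lie in Z[omega].  With
   theta_j = zeta^(c j^2), every coefficient of f is P(zeta) for an integer
   polynomial P, and P(zeta^(d^2)) = P(zeta) for d <> 0 mod p, because
   j |-> +-dj permutes the squares.  The only rational relation between
   1, zeta, ..., zeta^(p-1) is that they sum to 0, so once the exponents of P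
   are folded mod p its coefficients are constant on the nonzero squares and
   on the non-squares: P(zeta) is an integral combination of 1 and the Gauss
   period eta = sum_(j=1..r) zeta^(j^2).  Finally 1 + 2 eta is the quadratic
   Gauss sum, whose square is +-p; as the square of an odd algebraic integer
   it is 1 mod 4, hence equals eps p, and eta is omega - 1 or -omega. *)

Section ZOmega.
Variable p : nat.

Lemma Zomega_int (m : int) : in_Z_omega p m%:~R.
Proof. by exists m%:P; rewrite map_polyC hornerC. Qed.

Lemma Zomega_nat (m : nat) : in_Z_omega p m%:R.
Proof. exact: (Zomega_int m). Qed.

Lemma Zomega_omega : in_Z_omega p (omega p).
Proof. by exists 'X; rewrite map_polyX hornerX. Qed.

Lemma Zomega_add x y : in_Z_omega p x -> in_Z_omega p y -> in_Z_omega p (x + y).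
Proof. by move=> [P ->] [Q ->]; exists (P + Q); rewrite rmorphD hornerD. Qed.

Lemma Zomega_opp x : in_Z_omega p x -> in_Z_omega p (- x).
Proof. by move=> [P ->]; exists (- P); rewrite rmorphN hornerN. Qed.

Lemma Zomega_sub x y : in_Z_omega p x -> in_Z_omega p y -> in_Z_omega p (x - y).
Proof. by move=> Zx /Zomega_opp; apply: Zomega_add. Qed.

Lemma Zomega_mul x y : in_Z_omega p x -> in_Z_omega p y -> in_Z_omega p (x * y).
Proof. by move=> [P ->] [Q ->]; exists (P * Q); rewrite rmorphM hornerM. Qed.

End ZOmega.

Section VandermondeConjugation.
Variables (F : fieldType) (n : nat) (th : 'I_n.+1 -> F).
Hypothesis th_inj : injective th.

Let V : 'M[F]_n.+1 := \matrix_(j, k) (th j ^+ k).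
Let D : 'M[F]_n.+1 := \matrix_(j, k) (th j *+ (j == k)).

Definition root_poly : {poly F} := \prod_(j < n.+1) ('X - (th j)%:P).

(* The transpose of [companionmx root_poly]. *)
Definition companion_col_mx : 'M[F]_n.+1 :=
  \matrix_(i, k) (if k == ord_max then - root_poly`_i else (i == k.+1 :> nat)%:R).

Lemma vandermonde_unitmx : V \in unitmx.
Proof.
have -> : V = (Vandermonde n.+1 (\row_j th j))^T by apply/matrixP => j k; rewrite !mxE.
rewrite unitmx_tr unitmxE det_Vandermonde unitfE.
apply/prodf_neq0 => i _; apply/prodf_neq0 => j lt_ij; rewrite !mxE subr_eq0.
by apply: contraTneq lt_ij => /th_inj ->; rewrite ltnn.
Qed.

Lemma size_root_poly : size root_poly = n.+2.
Proof. by rewrite size_prod_XsubC /index_enum unlock -enumT size_enum_ord. Qed.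

Lemma root_poly_lead_coef : root_poly`_n.+1 = 1.
Proof.
by have /monicP := monic_prod_XsubC (index_enum 'I_n.+1) predT th; rewrite /lead_coef size_root_poly.
Qed.

Lemma root_poly_root j : root_poly.[th j] = 0.
Proof. by rewrite horner_prod (bigD1 j) //= hornerXsubC subrr mul0r. Qed.

Lemma vandermonde_companion : V *m companion_col_mx = D *m V.
Proof.
apply/matrixP => j k; rewrite !mxE [RHS](bigD1 j) //= [X in _ = _ + X]big1; last first.
  by move=> i ij; rewrite !mxE eq_sym (negbTE ij) mulr0n mul0r.
rewrite !mxE eqxx mulr1n addr0 -exprS.
have [->|k_max] := eqVneq k ord_max.
  have /eqP := root_poly_root j.
  rewrite horner_coef size_root_poly big_ord_recr /= root_poly_lead_coef mul1r.
  rewrite addr_eq0 => /eqP e; rewrite -[RHS]opprK -e -sumrN; apply: eq_bigr => i _.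
  by rewrite !mxE eqxx mulrN mulrC.
have lt_k1 : (k.+1 < n.+1)%N.
  by move: k_max; rewrite -val_eqE /= ltnS ltn_neqAle -ltnS ltn_ord andbT.
rewrite (bigD1 (Ordinal lt_k1)) //= big1 ?addr0 => [|i ik].
  by rewrite !mxE (negbTE k_max) eqxx mulr1.
rewrite !mxE (negbTE k_max); case: eqP => [ik1|]; last by rewrite mulr0.
by move: ik; rewrite -val_eqE /= ik1 eqxx.
Qed.

Lemma vandermonde_conj_diag : invmx V *m D *m V = companion_col_mx.
Proof.
by rewrite -mulmxA -vandermonde_companion mulmxA mulVmx ?mul1mx // vandermonde_unitmx.
Qed.

End VandermondeConjugation.

Lemma dvdp_size_scale (F : fieldType) (f q : {poly F}) :
  f != 0 -> f %| q -> (size q <= size f)%N -> exists k, q = k *: f.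
Proof.
move=> f_neq0 f_dvd_q size_q; exists (q %/ f)`_0.
rewrite -mul_polyC -[LHS](divpK f_dvd_q); congr (_ * _).
by apply: size1_polyC; rewrite size_divp // leq_subLR addn1 prednK ?size_poly_gt0.
Qed.

Section AdditiveCharacter.
Variable p : nat.
Hypothesis pr_p : prime p.

Local Notation z := (zeta p).

Lemma zeta_prim : p.-primitive_root z.
Proof.
have p_gt0 := prime_gt0 pr_p; have p_gt1 := prime_gt1 pr_p.
have zp : z ^+ p = 1 by rewrite /zeta exprAC rootCK // sqrrN expr1n.
have [m z_m m_p] := prim_order_exists p_gt0 zp.
case/primeP: pr_p => _ /(_ m m_p) /orP[] /eqP m_eq; last by rewrite m_eq in z_m.
have := prim_expr_order z_m; rewrite m_eq expr1 /zeta => /eqP.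
rewrite sqrf_eq1 => /orP[] /eqP root1.
  have := rootCK p_gt0 (-1 : algC); rewrite root1 expr1n => /eqP.
  by rewrite -addr_eq0 -[1 + 1]/(2%:R : algC) pnatr_eq0.
by have := rootC_lt0 (-1 : algC) p_gt1; rewrite root1 ltrN10.
Qed.

Lemma Fp_val_lt (x : 'F_p) : (x < p)%N.
Proof. by rewrite -{2}(Fp_cast pr_p) ltn_ord. Qed.

Definition psi (x : 'F_p) : algC := z ^+ x.

Lemma psi_nat m : psi m%:R = z ^+ m.
Proof. by rewrite /psi val_Fp_nat // (prim_expr_mod zeta_prim). Qed.

Lemma psi0 : psi 0 = 1.
Proof. exact: expr0. Qed.

Lemma psi1 : psi 1 = z.
Proof. by rewrite -[1]/(1%:R) psi_nat expr1. Qed.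

Lemma psiD x y : psi (x + y) = psi x * psi y.
Proof. by rewrite -[x]natr_Zp -[y]natr_Zp -natrD !psi_nat exprD. Qed.

Lemma psiMn x m : psi (x * m%:R) = psi x ^+ m.
Proof. by rewrite -[x]natr_Zp -natrM !psi_nat exprM. Qed.

Lemma psi_neq0 x : psi x != 0.
Proof. by rewrite expf_neq0 // (prim_root_eq0 zeta_prim) -lt0n prime_gt0. Qed.

Lemma psiN x : psi (- x) = (psi x)^-1.
Proof. by apply: (mulfI (psi_neq0 x)); rewrite -psiD subrr psi0 mulfV ?psi_neq0. Qed.

Lemma psi_inj : injective psi.
Proof.
move=> x y /eqP; rewrite /psi (eq_prim_root_expr zeta_prim).
by rewrite !modn_small ?Fp_val_lt // => /eqP/val_inj.
Qed.

Lemma psi_Aint x : psi x \in Aint.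
Proof. by rewrite rpredX // (Aint_prim_root zeta_prim). Qed.

Lemma psi_prim a : a != 0 -> p.-primitive_root (psi a).
Proof.
move=> a_neq0; rewrite prim_root_exp_coprime ?zeta_prim // coprime_sym prime_coprime //.
by apply: contra a_neq0; rewrite (dvdn_pcharf (pchar_Fp pr_p)) natr_Zp.
Qed.

Lemma zeta_exprz (m : int) : z ^ m = psi m%:~R.
Proof.
case: m => k; first exact: (esym (psi_nat k)).
by rewrite NegzE rmorphN psiN psi_nat -exprnN.
Qed.

Lemma sum_psi : \sum_(x : 'F_p) psi x = 0.
Proof.
have shift : \sum_(x : 'F_p) psi x = z * \sum_(x : 'F_p) psi x.
  rewrite [LHS](reindex_inj (addrI 1)) mulr_sumr /=.
  by apply: eq_bigr => x _; rewrite psiD psi1.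
have /eqP : (1 - z) * \sum_(x : 'F_p) psi x = 0 by rewrite mulrBl mul1r -shift subrr.
rewrite mulf_eq0 subr_eq0 => /orP[/eqP z1|/eqP //].
have := prim_order_dvd zeta_prim 1; rewrite expr1 -z1 eqxx.
by rewrite dvdn1 gtn_eqF ?prime_gt1.
Qed.

Lemma sum_psiM a : \sum_(x : 'F_p) psi (a * x) = if a == 0 then p%:R else 0.
Proof.
have [->|a_neq0] := eqVneq a 0.
  by under eq_bigr do rewrite mul0r psi0; rewrite sumr_const card_Fp.
by rewrite -[0 in RHS](sum_psi) [in RHS](reindex_inj (mulfI a_neq0)).
Qed.

Lemma sumFp_nat (V : nmodType) (G : nat -> V) : \sum_(x : 'F_p) G x = \sum_(i < p) G i.
Proof. by rewrite -(big_mkord xpredT G) Fp_cast // big_mkord. Qed.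

Definition Fp_fun_poly (w : 'F_p -> int) : {poly rat} := \poly_(i < p) (w i%:R)%:~R.

Lemma Fp_fun_poly_root (a : 'F_p) (w : 'F_p -> int) :
  \sum_x (w x)%:~R * psi (a * x) = 0 -> root (map_poly ratr (Fp_fun_poly w)) (psi a).
Proof.
move=> w_rel; rewrite /root (horner_coef_wide _ (n := p)); last first.
  by rewrite size_map_poly size_poly.
rewrite -(sumFp_nat (fun i => _`_i * psi a ^+ i)) -[X in _ == X]w_rel; apply/eqP/eq_bigr => x _.
by rewrite coef_map coef_poly Fp_val_lt /= rmorph_int natr_Zp -psiMn natr_Zp.
Qed.

Lemma sum_psi_eq0_const (a : 'F_p) (w : 'F_p -> int) : a != 0 ->
  \sum_x (w x)%:~R * psi (a * x) = 0 -> forall x, w x = w 0.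
Proof.
move=> a_neq0 w_rel.
have [f [minE _] f_dvd] := minCpolyP (psi a).
have size_f : size f = p.
  rewrite -(size_map_poly (@ratr algC)) -minE (minCpoly_cyclotomic (psi_prim a_neq0)).
  by rewrite size_cyclotomic totient_prime // prednK // prime_gt0.
have f_neq0 : f != 0 by rewrite -size_poly_eq0 size_f -lt0n prime_gt0.
(* Every relation is a multiple of the minimal polynomial of [psi a], of size p,
   hence proportional to the relation with all weights 1. *)
have scaled v : \sum_x (v x)%:~R * psi (a * x) = 0 ->
    exists k, forall i, (i < p)%N -> (v i%:R)%:~R = k * f`_i.
  move/Fp_fun_poly_root; rewrite f_dvd => /dvdp_size_scale[//||k vE].
    by rewrite size_f size_poly.
  by exists k => i lt_ip; rewrite -coefZ -vE coef_poly lt_ip.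
have [k wE] := scaled w w_rel.
have [k' oneE] : exists k', forall i, (i < p)%N -> 1 = k' * f`_i.
  have [|k' oneE] := scaled (fun=> 1%Z); last by exists k' => i /oneE; rewrite rmorph1.
  by under eq_bigr do rewrite rmorph1 mul1r; rewrite sum_psiM (negbTE a_neq0).
have k'_neq0 : k' != 0.
  by apply: contra_eq_neq (oneE 0%N (prime_gt0 pr_p)) => ->; rewrite mul0r oner_neq0.
have constE i : (i < p)%N -> ((w i%:R)%:~R : rat) = k / k'.
  by move=> lt_ip; rewrite wE // -[k in RHS]mulr1 (oneE i lt_ip) mulrCA mulrAC divff // mul1r.
move=> x; apply: (@intr_inj rat); rewrite -[x]natr_Zp constE ?Fp_val_lt //.
by rewrite -(constE 0%N) ?prime_gt0.
Qed.

Definition fold_coef (P : {poly int}) (x : 'F_p) : int :=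
  \sum_(i < size P | i%:R == x) P`_i.

Lemma horner_psi_fold (P : {poly int}) a :
  (map_poly intr P).[psi a] = \sum_x (fold_coef P x)%:~R * psi (a * x).
Proof.
rewrite horner_coef size_map_inj_poly ?rmorph0 //; last exact: intr_inj.
rewrite (partition_big (fun i : 'I_(size P) => (i%:R : 'F_p)) predT) //=.
apply: eq_bigr => x _; rewrite rmorph_sum mulr_suml.
by apply: eq_big => // i /eqP <-; rewrite coef_map -psiMn.
Qed.

Lemma fold_coef_mul (P : {poly int}) b : b != 0 ->
  (map_poly intr P).[psi b] = (map_poly intr P).[psi 1] ->
  forall x, fold_coef P (b * x) = fold_coef P x.
Proof.
move=> b_neq0 P_inv.
have fold_rel : \sum_x (fold_coef P x - fold_coef P (b * x))%:~R * psi (b * x) = 0.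
  under eq_bigr do rewrite rmorphB /= mulrBl.
  rewrite sumrB -horner_psi_fold P_inv horner_psi_fold.
  rewrite [X in X - _](reindex_inj (mulfI b_neq0)) /=.
  by under eq_bigr do rewrite mul1r; rewrite subrr.
move=> x; have /eqP := sum_psi_eq0_const b_neq0 fold_rel x.
by rewrite mulr0 subrr subr_eq0 => /eqP.
Qed.

End AdditiveCharacter.

Lemma sqr_one_plus_twice_Aint_mod4 (x : algC) (m : int) :
  x \in Aint -> (1 + x *+ 2) ^+ 2 = m%:~R -> (4 %| m - 1)%Z.
Proof.
move=> Ax sqr_m.
have quarter : (m - 1)%:~R / 4%:R = x ^+ 2 + x :> algC by rewrite rmorphB /= -sqr_m; field.
have : ((m - 1)%:~R / 4%:R : algC) \is a Num.int.
  apply: Cint_rat_Aint; first by rewrite rpredM ?rpredV ?rpred_int ?rpred_nat.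
  by rewrite quarter rpredD ?rpredX.
case/intrP => k k_def; apply/dvdzP; exists k; apply: (@intr_inj algC).
by rewrite rmorphM /= -k_def divfK ?pnatr_eq0.
Qed.

Section OddPrime.
Variable p : nat.
Hypotheses (pr_p : prime p) (odd_p : odd p).

Local Notation r := (p.-1)./2.
Local Notation psi := (@psi p).

Let Fp_nat_eq0 m : ((m%:R : 'F_p) == 0) = (p %| m)%N.
Proof. by rewrite (dvdn_pcharf (pchar_Fp pr_p)). Qed.

Lemma p_double_half : p = r.*2.+1.
Proof.
have p_gt0 := prime_gt0 pr_p; have := odd_double_half p.-1.
have -> : odd p.-1 = false by move: odd_p; rewrite -{1}(prednK p_gt0) /= => /negbTE.
by rewrite add0n => ->; rewrite prednK.
Qed.

Lemma sqr_half_inj j k : (j < r.+1)%N -> (k < r.+1)%N ->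
  (j%:R : 'F_p) ^+ 2 = k%:R ^+ 2 -> j = k.
Proof.
move=> lt_jr lt_kr /eqP; rewrite -subr_eq0 subr_sqr mulf_eq0 => /orP[|].
  rewrite subr_eq0 => /eqP/(congr1 val).
  by rewrite /= !val_Fp_nat // !modn_small //; have := p_double_half; lia.
rewrite -natrD Fp_nat_eq0 => /dvdn_leq; have := p_double_half; lia.
Qed.

Definition half_rep (x : 'F_p) : nat := if (x <= r)%N then x : nat else (p - x)%N.

Lemma half_rep_lt x : (half_rep x < r.+1)%N.
Proof. by rewrite /half_rep; case: ifP => //; have := Fp_val_lt pr_p x; have := p_double_half; lia. Qed.

Lemma half_rep_sqr x : (half_rep x)%:R ^+ 2 = x ^+ 2.
Proof.
rewrite /half_rep; case: ifP => _; first by rewrite natr_Zp.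
by rewrite natrB ?(ltnW (Fp_val_lt pr_p x)) // pchar_Fp_0 // sub0r sqrrN natr_Zp.
Qed.

Lemma exists_nonsquare : exists c : 'F_p, forall x, x ^+ 2 != c.
Proof.
pose S := [set (j%:R : 'F_p) ^+ 2 | j : 'I_r.+1].
have : ~~ ([set: 'F_p] \subset S).
  apply/negP => /subset_leq_card; rewrite cardsT card_Fp //.
  move/leq_trans => /(_ _ (leq_imset_card _ _)); rewrite card_ord.
  by have := p_double_half; have := prime_gt1 pr_p; lia.
case/subsetPn => c _ cS; exists c => x; apply: contra cS => /eqP <-.
by apply/imsetP; exists (Ordinal (half_rep_lt x)); rewrite ?half_rep_sqr.
Qed.

Definition halfsys (j : 'I_r) : 'F_p := j.+1%:R.

Lemma halfsys_neq0 j : halfsys j != 0.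
Proof.
rewrite Fp_nat_eq0; apply/negP => /dvdn_leq.
by have := ltn_ord j; have := p_double_half; lia.
Qed.

Lemma halfsys_sqr_inj : injective (fun j => halfsys j ^+ 2).
Proof.
by move=> j k /(@sqr_half_inj j.+1 k.+1 (ltn_ord j) (ltn_ord k)) [/val_inj].
Qed.

Lemma sumFp_split (V : nmodType) (u : 'F_p -> V) (s t : 'I_r -> 'F_p) :
  (forall j, s j != 0) -> (forall j, t j != 0) -> injective s -> injective t ->
  (forall j k, s j != t k) ->
  \sum_x u x = u 0 + \sum_(j < r) u (s j) + \sum_(j < r) u (t j).
Proof.
move=> s_neq0 t_neq0 s_inj t_inj st.
pose h (bj : bool * 'I_r) := if bj.1 then s bj.2 else t bj.2.
have h_inj : injective h.
  move=> [[] j] [[] k]; rewrite /h /=.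
  - by move/s_inj ->.
  - by move=> e; move: (st j k); rewrite e eqxx.
  - by move=> e; move: (st k j); rewrite e eqxx.
  - by move/t_inj ->.
have h_img : h @: setT = [set~ 0].
  apply/eqP; rewrite eqEcard; apply/andP; split.
    by apply/subsetP => _ /imsetP[[[] j] _ ->]; rewrite !inE /h /= ?s_neq0 ?t_neq0.
  rewrite card_imset // cardsC1 card_Fp // cardsT card_prod card_bool card_ord.
  by rewrite {1}p_double_half mul2n.
rewrite (bigD1 0) //= -addrA; congr (_ + _).
rewrite (eq_bigl (mem (h @: setT))) => [|x]; last by rewrite h_img !inE.
rewrite big_imset /= => [|? ? _ _]; last exact: h_inj.
rewrite (eq_bigl predT) => [|x]; last by rewrite inE.
by rewrite -(pair_big predT predT (fun b j => u (h (b, j)))) big_bool.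
Qed.

Lemma sum_sqr (V : nmodType) (v : 'F_p -> V) :
  \sum_x v (x ^+ 2) = v 0 + (\sum_(j < r) v (halfsys j ^+ 2)) *+ 2.
Proof.
rewrite (@sumFp_split _ _ halfsys (fun j => - halfsys j)).
- by rewrite expr0n -addrA mulr2n; under [X in _ + (_ + X)]eq_bigr do rewrite sqrrN.
- exact: halfsys_neq0.
- by move=> j; rewrite oppr_eq0 halfsys_neq0.
- by move=> j k /(congr1 (fun x => x ^+ 2)) /halfsys_sqr_inj.
- by move=> j k /oppr_inj /(congr1 (fun x => x ^+ 2)) /halfsys_sqr_inj.
move=> j k; rewrite -addr_eq0 /halfsys -natrD Fp_nat_eq0; apply/negP => /dvdn_leq.
by have := ltn_ord j; have := ltn_ord k; have := p_double_half; lia.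
Qed.

Lemma sum_nonsquare (V : nmodType) (c : 'F_p) (u : 'F_p -> V) :
  (forall x, x ^+ 2 != c) ->
  \sum_x u x = u 0 + \sum_(j < r) u (halfsys j ^+ 2) + \sum_(j < r) u (c * halfsys j ^+ 2).
Proof.
move=> c_nsq; have c_neq0 : c != 0 by move: (c_nsq 0); rewrite expr0n eq_sym.
apply: sumFp_split.
- by move=> j; rewrite sqrf_eq0 halfsys_neq0.
- by move=> j; rewrite mulf_neq0 // sqrf_eq0 halfsys_neq0.
- exact: halfsys_sqr_inj.
- by move=> j k /(mulfI c_neq0) /halfsys_sqr_inj.
move=> j k; apply: contraNneq (c_nsq (halfsys j / halfsys k)) => e.
by rewrite expr_div_n e mulfK // sqrf_eq0 halfsys_neq0.
Qed.

Definition period : algC := \sum_(j < r) psi (halfsys j ^+ 2).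

Lemma gauss_sum_period : \sum_x psi (x ^+ 2) = 1 + period *+ 2.
Proof. by rewrite sum_sqr psi0. Qed.

Lemma gauss_sum_mulN : (\sum_x psi (x ^+ 2)) * (\sum_x psi (- x ^+ 2)) = p%:R.
Proof.
have two_neq0 : (2%:R : 'F_p) != 0.
  by rewrite Fp_nat_eq0 dvdn_prime2 //; apply: contraTneq odd_p => ->.
rewrite mulr_suml.
transitivity (\sum_x \sum_t psi (- t ^+ 2) * psi ((- (2%:R * t)) * x)).
  apply: eq_bigr => x _; rewrite mulr_sumr (reindex_inj (addrI x)) /=.
  by apply: eq_bigr => t _; rewrite -!(psiD pr_p); congr psi; ring.
rewrite exchange_big /=; under eq_bigr => t _ do rewrite -mulr_sumr (sum_psiM pr_p).
rewrite (bigD1 0) //= big1 ?addr0 => [|t t_neq0].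
  by rewrite mulr0 oppr0 eqxx expr0n oppr0 psi0 mul1r.
by rewrite oppr_eq0 mulf_eq0 (negbTE two_neq0) (negbTE t_neq0) mulr0.
Qed.

Lemma gauss_sum_sqr_pm :
  (1 + period *+ 2) ^+ 2 = p%:R \/ (1 + period *+ 2) ^+ 2 = - p%:R.
Proof.
rewrite -gauss_sum_period -gauss_sum_mulN expr2.
case: (boolP [exists d : 'F_p, d ^+ 2 == -1]) => [/existsP[d /eqP d2N1]|no_sqrtN1].
  left; congr (_ * _).
  have d_neq0 : d != 0 by rewrite -sqrf_eq0 d2N1 oppr_eq0 oner_eq0.
  rewrite (reindex_inj (mulfI d_neq0)); apply: eq_bigr => x _.
  by rewrite exprMn d2N1 mulN1r.
right; have nsqN1 (x : 'F_p) : x ^+ 2 != -1.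
  by apply: contra no_sqrtN1 => sqN1; apply/existsP; exists x.
suff -> : \sum_x psi (- x ^+ 2) = - \sum_x psi (x ^+ 2) by rewrite mulrN opprK.
have := sum_nonsquare psi nsqN1; rewrite (sum_psi pr_p) psi0 -/period => sum0.
rewrite (sum_sqr (fun y => psi (- y))) gauss_sum_period oppr0 psi0 /=.
under eq_bigr do rewrite -mulN1r.
set B := \sum_(j < r) _ in sum0 *.
have -> : B = -1 - period by apply: (addrI (1 + period)); rewrite -sum0; ring.
ring.
Qed.

Lemma gauss_sum_sqr : (1 + period *+ 2) ^+ 2 = sqrt_eps_p p ^+ 2.
Proof.
have period_Aint : period \in Aint by rewrite rpred_sum // => j _; exact: psi_Aint.
rewrite /sqrt_eps_p; case: gauss_sum_sqr_pm => sqrE; rewrite sqrE.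
  have := sqr_one_plus_twice_Aint_mod4 (m := p) period_Aint sqrE => mod4.
  have -> : (p %% 4 == 1)%N by apply/eqP; lia.
  by rewrite sqrtCK.
have := sqr_one_plus_twice_Aint_mod4 (m := - p%:Z) period_Aint.
rewrite sqrE rmorphN => /(_ erefl) mod4.
have -> : (p %% 4 == 1)%N = false by apply/eqP; lia.
by rewrite exprMn sqrtCK sqrCi mulN1r.
Qed.

Lemma period_Zomega : in_Z_omega p period.
Proof.
have two_neq0 : (2%:R : algC) != 0 by rewrite pnatr_eq0.
have /eqP := gauss_sum_sqr; rewrite -subr_eq0 subr_sqr mulf_eq0 subr_eq0 addr_eq0.
case/orP => /eqP sqrt_epsE.
  have -> : period = omega p - 1 by rewrite /omega -sqrt_epsE; field.
  exact: Zomega_sub (Zomega_omega p) (Zomega_nat p 1).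
have -> : period = - omega p.
  by rewrite /omega -[sqrt_eps_p p]opprK -sqrt_epsE; field.
exact: Zomega_opp (Zomega_omega p).
Qed.

Lemma Zomega_sqr_invariant (P : {poly int}) :
  (forall d : 'F_p, d != 0 -> (map_poly intr P).[psi (d ^+ 2)] = (map_poly intr P).[psi 1]) ->
  in_Z_omega p (map_poly intr P).[zeta p].
Proof.
move=> P_inv.
have fold_sqr_inv (d x : 'F_p) : d != 0 -> fold_coef P (d ^+ 2 * x) = fold_coef P x.
  by move=> d_neq0; rewrite fold_coef_mul ?sqrf_eq0 ?P_inv.
have [c c_nsq] := exists_nonsquare.
have fold_sqr (j : 'I_r) : fold_coef P (halfsys j ^+ 2) = fold_coef P (1 : 'F_p).
  by rewrite -[_ ^+ 2]mulr1 (fold_sqr_inv _ _ (halfsys_neq0 j)).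
have fold_nsq (j : 'I_r) : fold_coef P (c * halfsys j ^+ 2) = fold_coef P c.
  by rewrite mulrC (fold_sqr_inv _ _ (halfsys_neq0 j)).
have nsq_period : \sum_(j < r) psi (c * halfsys j ^+ 2) = -1 - period.
  have := sum_nonsquare psi c_nsq; rewrite (sum_psi pr_p) psi0 -/period => sum0.
  by apply: (addrI (1 + period)); rewrite -sum0; ring.
rewrite -(psi1 pr_p) horner_psi_fold // (sum_nonsquare _ c_nsq) mulr0 psi0 mulr1.
under eq_bigr do rewrite mul1r fold_sqr.
under [X in _ + X]eq_bigr do rewrite mul1r fold_nsq.
rewrite -!mulr_sumr -/period nsq_period.
apply: Zomega_add; first apply: Zomega_add.
- exact: Zomega_int.
- exact: Zomega_mul (Zomega_int _ _) period_Zomega.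
- exact: Zomega_mul (Zomega_int _ _) (Zomega_sub (Zomega_opp (Zomega_nat p 1)) period_Zomega).
Qed.

Definition eval_psi (a : 'F_p) : {poly int} -> algC :=
  (horner_eval (psi a) \o map_poly intr)%FUN.

Definition sqr_class_poly (g : 'F_p) : {poly {poly int}} :=
  \prod_(j < r.+1) ('X - ('X^(nat_of_ord (g * j%:R ^+ 2 : 'F_p)))%:P).

Lemma map_sqr_class_poly g a :
  map_poly (eval_psi a) (sqr_class_poly g) =
  \prod_(j < r.+1) ('X - (psi (a * (g * j%:R ^+ 2)))%:P).
Proof.
rewrite /sqr_class_poly rmorph_prod; apply: eq_bigr => j _.
rewrite rmorphB; set e := nat_of_ord _.
by rewrite /= map_polyX map_polyC /= map_polyXn /horner_eval hornerXn /e -psiMn // natr_Zp.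
Qed.

Definition mul_half_rep (d : 'F_p) (j : 'I_r.+1) : 'I_r.+1 :=
  Ordinal (half_rep_lt (d * j%:R)).

Lemma mul_half_rep_inj d : d != 0 -> injective (mul_half_rep d).
Proof.
move=> d_neq0 j k /(congr1 (fun i : 'I_r.+1 => (i%:R : 'F_p) ^+ 2)) /=.
have d2_neq0 : d ^+ 2 != 0 by rewrite sqrf_eq0.
rewrite !half_rep_sqr !exprMn => /(mulfI d2_neq0).
by move/(sqr_half_inj (ltn_ord j) (ltn_ord k))/val_inj.
Qed.

Lemma sqr_class_poly_invariant g d : d != 0 ->
  map_poly (eval_psi (d ^+ 2)) (sqr_class_poly g) = map_poly (eval_psi 1) (sqr_class_poly g).
Proof.
move=> d_neq0; rewrite !map_sqr_class_poly [RHS](reindex_inj (mul_half_rep_inj d_neq0)) /=.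
apply: eq_bigr => j _; rewrite half_rep_sqr mul1r exprMn.
by congr ('X - (psi _)%:P); ring.
Qed.

Lemma sqr_class_poly_coef_Zomega g m :
  in_Z_omega p ((map_poly (eval_psi 1) (sqr_class_poly g))`_m).
Proof.
rewrite coef_map /= /horner_eval psi1 //; apply: Zomega_sqr_invariant => d d_neq0.
have := congr1 (fun P : {poly algC} => P`_m) (sqr_class_poly_invariant g d_neq0).
by rewrite /= !coef_map.
Qed.

End OddPrime.

Lemma theta_psi (p : nat) (c : int) (j : nat) : prime p ->
  theta p c j = psi (c%:~R * j%:R ^+ 2 : 'F_p).
Proof. by move=> pr_p; rewrite /theta zeta_exprz // rmorphM /= -natrX. Qed.

Theorem theorem1 (p : nat) (c : int) :
  prime p -> odd p -> (c = 1 \/ qnr p c) ->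
  forall i j : 'I_((p.-1)./2.+1), in_Z_omega p (Tprime p c i j).
Proof.
move=> pr_p odd_p c_1_or_qnr.
have c_neq0 : (c%:~R : 'F_p) != 0.
  rewrite -(dvdz_pcharf (pchar_Fp pr_p)).
  by case: c_1_or_qnr => [->|[]//]; rewrite dvdzE dvdn1 gtn_eqF ?prime_gt1.
have theta_inj : injective (fun j : 'I_((p.-1)./2.+1) => theta p c j).
  move=> j k; rewrite /= !theta_psi // => /(psi_inj pr_p)/(mulfI c_neq0).
  by move/(sqr_half_inj pr_p odd_p (ltn_ord j) (ltn_ord k))/val_inj.
have -> : Tprime p c = companion_col_mx _ := vandermonde_conj_diag theta_inj.
move=> i k; rewrite mxE; case: eqP => _; last exact: Zomega_nat.
suff -> : root_poly (fun j : 'I_((p.-1)./2.+1) => theta p c j) =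
          map_poly (@eval_psi p 1) (@sqr_class_poly p c%:~R).
  exact/Zomega_opp/sqr_class_poly_coef_Zomega.
by rewrite map_sqr_class_poly //; apply: eq_bigr => j _; rewrite mul1r theta_psi.
Qed.
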